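(* Let $a>0$, $u\neq 0$, $\lambda>0$ and $S$ a positive integer, and for $\gamma\in\mathbb{R}$ write $k:=a+\gamma$. On the set $I:=\{\gamma\in\mathbb{R}: 2k-\lambda[k^2+\tfrac2Sa^2]>0\}$ consider the (one-dimensional) expected test loss $$L_{\rm test}(\gamma)=\frac{a\gamma^2}{2k}\cdot\frac{2-\lambda k}{2k-\lambda\left[k^2+\frac2Sa^2\right]}\,u^2.$$ Then there exist $a$, $\lambda$ and $S$ such that $I$ is nonempty and the minimizer $\gamma^*=\arg\min_{\gamma\in I}L_{\rm test}(\gamma)$ satisfies $\gamma^*<0$.
   Context: This is the one-dimensional $L_2$-regularized linear regression trained by plain SGD with learning rate $\lambda$ and batch size $S$: inputs $x\sim\mathcal N(0,a)$, labels $y=ux$, loss $\frac12 a(w-u)^2+\frac12\gamma w^2$ with weight decay $\gamma$; $L_{\rm test}=\frac12 a\,\mathbb{E}_w[(w-u)^2]$ over the stationary distribution, which is finite exactly on $I$, where it is given by the displayed formula. *)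

From Stdlib Require Import Reals.
Open Scope R_scope.

Definition kk (a gamma : R) : R := a + gamma.

Definition inI (a lam : R) (S : nat) (gamma : R) : Prop :=
  2 * kk a gamma - lam * ((kk a gamma) ^ 2 + 2 / INR S * a ^ 2) > 0.

Definition Ltest (a u lam : R) (S : nat) (gamma : R) : R :=
  a * gamma ^ 2 / (2 * kk a gamma)
  * ((2 - lam * kk a gamma)
     / (2 * kk a gamma - lam * ((kk a gamma) ^ 2 + 2 / INR S * a ^ 2)))
  * u ^ 2.

Definition is_argmin_I (a u lam : R) (S : nat) (gamma : R) : Prop :=
  inI a lam S gamma /\
  forall g, inI a lam S g -> Ltest a u lam S gamma <= Ltest a u lam S g.

(** On the stability domain [I] the loss is nonnegative and vanishes at
    [gamma = 0], so [gamma = 0] is the minimizer whenever [0] lies in [I]; a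
    negative minimizer therefore needs a learning rate so large that [gamma = 0]
    is unstable. For [a = 1], [lambda = 3], [S = 36] the domain is
    [2k - 3k^2 - 1/6 > 0] with [k = 1 + gamma], which forces [0 < k < 1], i.e.
    [I] lies in [(-1, 0)]. On it the loss is minimal at [k = 1/2] with value
    [3/2 u^2], as the identity
    [(k-1)^2 (2-3k) - 3k (2k - 3k^2 - 1/6) = (k - 1/2)^2 (6k + 8)] shows. *)

From Stdlib Require Import Reals Lra Psatz.
Open Scope R_scope.

Section StabilityDomain.

Variables (a lam : R) (S : nat).
Hypotheses (lam_gt0 : 0 < lam) (S_gt0 : (0 < S)%nat).

Let D (gamma : R) : R :=
  2 * kk a gamma - lam * (kk a gamma ^ 2 + 2 / INR S * a ^ 2).

Lemma inI_kk_gt0 (gamma : R) : inI a lam S gamma -> 0 < kk a gamma.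
Proof.
  unfold inI; intros HI.
  assert (HS : 0 < INR S) by (apply lt_0_INR; lia).
  assert (Hc : 0 <= 2 / INR S * a ^ 2).
  { apply Rmult_le_pos; [apply Rlt_le, Rdiv_lt_0_compat|apply pow2_ge_0]; lra. }
  nra.
Qed.

Lemma Ltest_factor (u gamma : R) : inI a lam S gamma ->
  Ltest a u lam S gamma
  = u ^ 2 * (a * gamma ^ 2 * (2 - lam * kk a gamma)) / (2 * kk a gamma * D gamma).
Proof.
  intros HI; pose proof (inI_kk_gt0 gamma HI) as Hk.
  unfold inI in HI; unfold Ltest, D; set (c := 2 / INR S * a ^ 2) in *.
  field; split; lra.
Qed.

Lemma Ltest_ge (c u gamma : R) : inI a lam S gamma ->
  c * (2 * kk a gamma * D gamma) <= a * gamma ^ 2 * (2 - lam * kk a gamma) ->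
  c * u ^ 2 <= Ltest a u lam S gamma.
Proof.
  intros HI Hc; rewrite Ltest_factor by exact HI.
  assert (HkD : 0 < 2 * kk a gamma * D gamma).
  { pose proof (inI_kk_gt0 gamma HI) as Hk; unfold inI in HI; unfold D; nra. }
  unfold Rdiv; rewrite Rmult_assoc, (Rmult_comm c).
  apply Rmult_le_compat_l; [apply pow2_ge_0|].
  apply (Rmult_le_reg_r (2 * kk a gamma * D gamma)); [exact HkD|].
  rewrite (Rmult_assoc _ (/ _)), Rinv_l, Rmult_1_r by lra; exact Hc.
Qed.

Lemma Ltest_eq (c u gamma : R) : inI a lam S gamma ->
  c * (2 * kk a gamma * D gamma) = a * gamma ^ 2 * (2 - lam * kk a gamma) ->
  Ltest a u lam S gamma = c * u ^ 2.
Proof.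
  intros HI Hc; rewrite Ltest_factor, <- Hc by exact HI.
  pose proof (inI_kk_gt0 gamma HI) as Hk; unfold inI in HI; unfold D.
  set (c' := 2 / INR S * a ^ 2) in *.
  field; split; lra.
Qed.

End StabilityDomain.

Lemma inI_1_3_36 (gamma : R) :
  inI 1 3 36 gamma <-> 2 * (1 + gamma) - 3 * (1 + gamma) ^ 2 - 1 / 6 > 0.
Proof.
  unfold inI, kk; replace (INR 36) with 36 by (simpl; ring).
  split; intro; lra.
Qed.

Lemma inI_1_3_36_neg (gamma : R) : inI 1 3 36 gamma -> gamma < 0.
Proof. rewrite inI_1_3_36; nra. Qed.

Lemma inI_1_3_36_half : inI 1 3 36 (-1/2).
Proof. rewrite inI_1_3_36; lra. Qed.

Lemma Ltest_1_3_36_min (u gamma : R) : inI 1 3 36 gamma ->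
  Ltest 1 u 3 36 (-1/2) <= Ltest 1 u 3 36 gamma.
Proof.
  intros HI.
  assert (lam_gt0 : 0 < 3) by lra.
  assert (S_gt0 : (0 < 36)%nat) by lia.
  pose proof (inI_kk_gt0 _ _ _ lam_gt0 S_gt0 _ HI) as Hk.
  rewrite (Ltest_eq _ _ _ lam_gt0 S_gt0 (3/2) u (-1/2) inI_1_3_36_half)
    by (replace (INR 36) with 36 by (simpl; ring); unfold kk; field).
  apply Ltest_ge; [exact lam_gt0 | exact S_gt0 | exact HI |].
  replace (INR 36) with 36 by (simpl; ring); unfold kk in *.
  assert (sos : 1 * gamma ^ 2 * (2 - 3 * (1 + gamma))
                - 3 / 2 * (2 * (1 + gamma) * (2 * (1 + gamma)
                    - 3 * ((1 + gamma) ^ 2 + 2 / 36 * 1 ^ 2)))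
                = (gamma + 1/2) ^ 2 * (6 * (1 + gamma) + 8)) by field.
  assert (0 <= (gamma + 1/2) ^ 2 * (6 * (1 + gamma) + 8))
    by (apply Rmult_le_pos; [apply pow2_ge_0 | lra]).
  lra.
Qed.

Theorem corollary1 :
  forall u : R, u <> 0 ->
  exists (a lam : R) (S : nat),
    0 < a /\ 0 < lam /\ (0 < S)%nat /\
    (exists g, inI a lam S g) /\
    (exists gstar, is_argmin_I a u lam S gstar /\ gstar < 0) /\
    (forall gstar, is_argmin_I a u lam S gstar -> gstar < 0).
Proof.
  intros u _. exists 1, 3, 36%nat.
  repeat split; try lra; try lia.
  - exists (-1/2); exact inI_1_3_36_half.
  - exists (-1/2); repeat split; try lra.
    + exact inI_1_3_36_half.
    + intros g; apply Ltest_1_3_36_min.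
  - intros gstar [HI _]; exact (inI_1_3_36_neg _ HI).
Qed.
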